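(* Let $(X,d)$ be an Alexandrov space with curvature bounded below by some $K\in\mathbb{R}$, and let $x_1,x_2,y_1,y_2\in X$ satisfy $$d(x_1,y_1)^2+d(x_2,y_2)^2\le d(x_1,y_2)^2+d(x_2,y_1)^2.$$ Let $\gamma_1,\gamma_2:[0,1]\to X$ be constant-speed minimizing geodesics from $x_1$ to $y_1$ and from $x_2$ to $y_2$, respectively. If $\gamma_1(t_0)=\gamma_2(t_0)$ for some $t_0\in(0,1)$, then $\gamma_1(t)=\gamma_2(t)$ for all $t\in[0,1]$.
   Context: An Alexandrov space with curvature $\geq K$ is a finite-dimensional, complete, locally compact, connected length space in which for every quadruple $(p;a,b,c)$ one has $\tilde\angle_K apb+\tilde\angle_K bpc+\tilde\angle_K cpa\le 2\pi$, where $\tilde\angle_K apb$ denotes the angle at $\bar p$ of the comparison triangle with the same side lengths in the model plane of constant curvature $K$. *)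

From Stdlib Require Import Reals Lra List.
Open Scope R_scope.

Record is_metric {X : Type} (d : X -> X -> R) : Prop := {
  metric_nonneg : forall x y, 0 <= d x y;
  metric_sep : forall x y, d x y = 0 <-> x = y;
  metric_sym : forall x y, d x y = d y x;
  metric_tri : forall x y z, d x z <= d x y + d y z
}.

Definition ball {X : Type} (d : X -> X -> R) (x : X) (r : R) : X -> Prop :=
  fun y => d x y < r.

Definition is_open {X : Type} (d : X -> X -> R) (U : X -> Prop) : Prop :=
  forall x, U x -> exists r, 0 < r /\ forall y, ball d x r y -> U y.

Definition is_complete {X : Type} (d : X -> X -> R) : Prop :=
  forall u : nat -> X,
    (forall eps, 0 < eps -> exists N, forall m n, (N <= m)%nat -> (N <= n)%nat ->
        d (u m) (u n) < eps) ->
    exists l, forall eps, 0 < eps -> exists N, forall n, (N <= n)%nat -> d (u n) l < eps.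

Definition is_compact {X : Type} (d : X -> X -> R) (Kset : X -> Prop) : Prop :=
  forall (I : Type) (U : I -> X -> Prop),
    (forall i, is_open d (U i)) ->
    (forall x, Kset x -> exists i, U i x) ->
    exists l : list I, forall x, Kset x -> exists i, In i l /\ U i x.

Definition is_locally_compact {X : Type} (d : X -> X -> R) : Prop :=
  forall x, exists N : X -> Prop, is_compact d N /\
    exists r, 0 < r /\ forall y, ball d x r y -> N y.

Definition is_connected {X : Type} (d : X -> X -> R) : Prop :=
  forall U V : X -> Prop, is_open d U -> is_open d V ->
    (forall x, U x \/ V x) -> (forall x, ~ (U x /\ V x)) ->
    (exists x, U x) -> (exists x, V x) -> False.

Definition curve_continuous {X : Type} (d : X -> X -> R) (c : R -> X) : Prop :=
  forall t, 0 <= t <= 1 -> forall eps, 0 < eps -> exists delta, 0 < delta /\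
    forall s, 0 <= s <= 1 -> Rabs (s - t) < delta -> d (c s) (c t) < eps.

Fixpoint poly_length {X : Type} (d : X -> X -> R) (c : R -> X) (p : nat -> R) (n : nat) : R :=
  match n with
  | O => 0
  | S k => poly_length d c p k + d (c (p k)) (c (p (S k)))
  end.

(** length of [c] on [0,1] is at most [L]: every partition sum is <= L
    (the length is the sup of these sums) *)
Definition curve_length_le {X : Type} (d : X -> X -> R) (c : R -> X) (L : R) : Prop :=
  forall (n : nat) (p : nat -> R),
    p O = 0 -> p n = 1 -> (forall i, (i < n)%nat -> p i <= p (S i)) ->
    poly_length d c p n <= L.

(** length space: d(x,y) is the infimum of lengths of curves joining x to y
    (every curve has length >= d(x,y) automatically by the triangle inequality) *)
Definition is_length_space {X : Type} (d : X -> X -> R) : Prop :=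
  forall x y eps, 0 < eps -> exists c : R -> X,
    curve_continuous d c /\ c 0 = x /\ c 1 = y /\ curve_length_le d c (d x y + eps).

(** finite dimension = finite Hausdorff dimension: there is s >= 0 with
    H^s(X) = 0, i.e. for every delta > 0, H^s_delta(X) = 0: for every eps > 0
    there is a countable cover by sets U_i of diameter <= r_i <= delta with
    sum r_i^s <= eps. *)
Definition is_finite_dimensional {X : Type} (d : X -> X -> R) : Prop :=
  exists s, 0 <= s /\
    forall delta eps, 0 < delta -> 0 < eps ->
      exists (U : nat -> X -> Prop) (r : nat -> R),
        (forall x, exists i, U i x) /\
        (forall i, 0 < r i <= delta) /\
        (forall i x y, U i x -> U i y -> d x y <= r i) /\
        (forall N, sum_f_R0 (fun i => Rpower (r i) s) N <= eps).

(** Angle at p of the comparison triangle with |pa| = a, |pb| = b, |ab| = c. *)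
Definition cmp_angle (K a b c : R) : R :=
  if Rlt_dec 0 K then
    let k := sqrt K in
    acos ((cos (k * c) - cos (k * a) * cos (k * b)) / (sin (k * a) * sin (k * b)))
  else if Rlt_dec K 0 then
    let k := sqrt (- K) in
    acos ((cosh (k * a) * cosh (k * b) - cosh (k * c)) / (sinh (k * a) * sinh (k * b)))
  else
    acos ((a ^ 2 + b ^ 2 - c ^ 2) / (2 * a * b)).

(** The comparison triangle (with a, b > 0) exists in the K-plane: always for
    K <= 0, and iff the perimeter is < 2 pi / sqrt K for K > 0. *)
Definition cmp_defined (K a b c : R) : Prop :=
  0 < a /\ 0 < b /\ (0 < K -> a + b + c < 2 * PI / sqrt K).

Definition cmp_angle_at {X : Type} (d : X -> X -> R) (K : R) (p x y : X) : R :=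
  cmp_angle K (d p x) (d p y) (d x y).

Definition cmp_defined_at {X : Type} (d : X -> X -> R) (K : R) (p x y : X) : Prop :=
  cmp_defined K (d p x) (d p y) (d x y).

Definition curv_ge {X : Type} (d : X -> X -> R) (K : R) : Prop :=
  forall p a b c : X,
    cmp_defined_at d K p a b -> cmp_defined_at d K p b c -> cmp_defined_at d K p c a ->
    cmp_angle_at d K p a b + cmp_angle_at d K p b c + cmp_angle_at d K p c a <= 2 * PI.

Definition is_alexandrov {X : Type} (d : X -> X -> R) (K : R) : Prop :=
  is_metric d /\ is_finite_dimensional d /\ is_complete d /\ is_locally_compact d /\
  is_connected d /\ is_length_space d /\ curv_ge d K.

Definition is_cs_geodesic {X : Type} (d : X -> X -> R) (g : R -> X) (x y : X) : Prop :=
  g 0 = x /\ g 1 = y /\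
  forall s t, 0 <= s <= 1 -> 0 <= t <= 1 -> d (g s) (g t) = Rabs (s - t) * d x y.

From Stdlib Require Import Reals Lra.
Open Scope R_scope.

(* The triangle inequality through the meeting point gives
   d(x1,y2) <= t0 |g1| + (1 - t0) |g2| and symmetrically for d(x2,y1); together with
   the hypothesis this forces |g1| = |g2| = d(x1,y2) = d(x2,y1).  Hence whenever the
   geodesics meet at a time t1, the curve following g1 up to t1 and g2 afterwards is
   again a minimizing geodesic.  Seen from a point u of g1 just before the meeting
   point z, both g1(t) and g2(t) then lie straight beyond z: the comparison angles at
   z from u to them are pi, and the quadruple condition leaves a zero comparison angle
   between g1(t) and g2(t), i.e. g1(t) = g2(t) for t close to t1 (close enough for the
   comparison triangles to exist when K > 0).  Finitely many such steps cover [0,1]. *)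

Lemma acos_le0_ge1 (x : R) : acos x <= 0 -> 1 <= x.
Proof.
  intros H. destruct (Rle_dec 1 x) as [Hx | Hx]; [exact Hx | exfalso].
  pose proof PI_RGT_0.
  destruct (Rle_dec x (-1)) as [Hx' | Hx'].
  - unfold acos in H. destruct (Rle_dec x (-1)); lra.
  - pose proof (acos_bound_lt x ltac:(lra)). lra.
Qed.

Lemma acos_div_le0 (N D : R) : 0 < D -> acos (N / D) <= 0 -> D <= N.
Proof.
  intros HD H. apply acos_le0_ge1 in H.
  replace N with (N / D * D) by (field; lra). nra.
Qed.

Lemma acos_div_opp (N D : R) : D <> 0 -> N = - D -> acos (N / D) = PI.
Proof.
  intros HD ->. replace (- D / D) with (cos PI) by (rewrite cos_PI; field; exact HD).
  apply acos_cos. pose proof PI_RGT_0. lra.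
Qed.

Lemma cos_lt_1 (x : R) : 0 < x < 2 * PI -> cos x < 1.
Proof.
  intros Hx. assert (0 < sin (x / 2)) by (apply sin_gt_0; lra).
  replace x with (2 * (x / 2)) by field. rewrite cos_2a_sin. nra.
Qed.

Lemma cosh_gt_1 (x : R) : 0 < x -> 1 < cosh x.
Proof.
  intros Hx. unfold cosh.
  assert (1 < exp x) by (rewrite <- exp_0; apply exp_increasing; exact Hx).
  assert (exp x * exp (- x) = 1) by (rewrite <- exp_plus, Rplus_opp_r; apply exp_0).
  pose proof (exp_pos (- x)). nra.
Qed.

Lemma sinh_pos (x : R) : 0 < x -> 0 < sinh x.
Proof. intros Hx. rewrite <- sinh_0. apply sinh_lt, Hx. Qed.

Lemma cosh_plus (x y : R) : cosh (x + y) = cosh x * cosh y + sinh x * sinh y.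
Proof.
  unfold cosh, sinh. rewrite Ropp_plus_distr, !exp_plus. field.
Qed.

Lemma cosh_sinh_sq (x : R) : cosh x * cosh x - sinh x * sinh x = 1.
Proof.
  unfold cosh, sinh.
  assert (exp x * exp (- x) = 1) by (rewrite <- exp_plus, Rplus_opp_r; apply exp_0).
  nra.
Qed.

Lemma sqrt_mul_lt_of_lt_div (K s c : R) : 0 < K -> s < c / sqrt K -> sqrt K * s < c.
Proof.
  intros HK Hs. pose proof (sqrt_lt_R0 K HK).
  apply Rmult_lt_compat_l with (r := sqrt K) in Hs; [|exact H].
  replace (sqrt K * (c / sqrt K)) with c in Hs by (field; lra). exact Hs.
Qed.

Lemma cmp_angle_straight (K a b : R) : cmp_defined K a b (a + b) -> cmp_angle K a b (a + b) = PI.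
Proof.
  intros (Ha & Hb & Hper). unfold cmp_angle.
  destruct (Rlt_dec 0 K) as [HK | HK].
  - pose proof (sqrt_lt_R0 K HK).
    pose proof (sqrt_mul_lt_of_lt_div K _ _ HK (Hper HK)).
    assert (0 < sin (sqrt K * a)) by (apply sin_gt_0; nra).
    assert (0 < sin (sqrt K * b)) by (apply sin_gt_0; nra).
    apply acos_div_opp; [nra | rewrite Rmult_plus_distr_l, cos_plus; ring].
  - destruct (Rlt_dec K 0) as [HK' | HK'].
    + assert (0 < sqrt (- K)) by (apply sqrt_lt_R0; lra).
      assert (0 < sinh (sqrt (- K) * a)) by (apply sinh_pos; nra).
      assert (0 < sinh (sqrt (- K) * b)) by (apply sinh_pos; nra).
      apply acos_div_opp; [nra | rewrite Rmult_plus_distr_l, cosh_plus; ring].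
    + apply acos_div_opp; [nra | ring].
Qed.

Lemma cmp_angle_isosceles_le0 (K r e : R) :
  cmp_defined K r r e -> 0 <= e -> cmp_angle K r r e <= 0 -> e = 0.
Proof.
  intros (Hr & _ & Hper) He H. unfold cmp_angle in H.
  destruct (Rlt_dec 0 K) as [HK | HK].
  - pose proof (sqrt_mul_lt_of_lt_div K _ _ HK (Hper HK)).
    set (k := sqrt K) in *. assert (0 < k) by (apply sqrt_lt_R0; exact HK).
    assert (0 < sin (k * r)) by (apply sin_gt_0; nra).
    apply acos_div_le0 in H; [|nra].
    pose proof (sin2_cos2 (k * r)). unfold Rsqr in *.
    destruct (Req_dec e 0) as [E | E]; [exact E | exfalso].
    assert (0 < e) by lra.
    assert (cos (k * e) < 1) by (apply cos_lt_1; split; nra).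
    nra.
  - destruct (Rlt_dec K 0) as [HK' | HK'].
    + set (k := sqrt (- K)) in *. assert (0 < k) by (apply sqrt_lt_R0; lra).
      assert (0 < sinh (k * r)) by (apply sinh_pos; nra).
      apply acos_div_le0 in H; [|nra].
      pose proof (cosh_sinh_sq (k * r)).
      destruct (Req_dec e 0) as [E | E]; [exact E | exfalso].
      assert (0 < e) by lra.
      assert (1 < cosh (k * e)) by (apply cosh_gt_1; nra).
      nra.
    + apply acos_div_le0 in H; nra.
Qed.

Section CurvatureBoundedBelow.

Variables (X : Type) (d : X -> X -> R) (K : R).
Hypotheses (Hm : is_metric d) (Hcurv : curv_ge d K).

Lemma curv_ge_no_branching (z u b c : X) (p r : R) :
  0 < p -> p <= r -> (0 < K -> 4 * r < 2 * PI / sqrt K) ->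
  d z u = p -> d z b = r -> d z c = r -> d u b = p + r -> d u c = p + r -> b = c.
Proof.
  intros Hp Hpr Hsmall Hzu Hzb Hzc Hub Huc.
  assert (Hcu : d c u = r + p) by (rewrite (metric_sym d Hm), Huc; ring).
  assert (Hbc : d b c <= r + r).
  { pose proof (metric_tri d Hm b z c). rewrite (metric_sym d Hm b z) in *. lra. }
  pose proof (metric_nonneg d Hm b c).
  assert (Hub_def : cmp_defined_at d K z u b)
    by (unfold cmp_defined_at, cmp_defined; rewrite Hzu, Hzb, Hub; repeat split; lra).
  assert (Hbc_def : cmp_defined_at d K z b c)
    by (unfold cmp_defined_at, cmp_defined; rewrite Hzb, Hzc; repeat split; lra).
  assert (Hcu_def : cmp_defined_at d K z c u)
    by (unfold cmp_defined_at, cmp_defined; rewrite Hzc, Hzu, Hcu; repeat split; lra).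
  (* [b] and [c] both lie straight beyond [z] as seen from [u], so the quadruple
     condition at [z] leaves no room for an angle between them. *)
  pose proof (Hcurv z u b c Hub_def Hbc_def Hcu_def) as Hsum.
  unfold cmp_defined_at, cmp_angle_at in *.
  rewrite Hzu, Hzb, Hzc, Hub, Hcu in *.
  rewrite cmp_angle_straight in Hsum by exact Hub_def.
  rewrite cmp_angle_straight in Hsum by exact Hcu_def.
  apply (metric_sep d Hm), (cmp_angle_isosceles_le0 K r); [assumption | assumption | lra].
Qed.

Lemma cs_geodesic_dist (g : R -> X) (x y : X) (s t : R) :
  is_cs_geodesic d g x y -> 0 <= s -> s <= t -> t <= 1 -> d (g s) (g t) = (t - s) * d x y.
Proof.
  intros (_ & _ & Hg) Hs Hst Ht. rewrite Hg by lra.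
  rewrite Rabs_minus_sym, Rabs_pos_eq; lra.
Qed.

Lemma cs_geodesic_dist_start (g : R -> X) (x y : X) (t : R) :
  is_cs_geodesic d g x y -> 0 <= t <= 1 -> d x (g t) = t * d x y.
Proof.
  intros Hg Ht. pose proof Hg as (Hg0 & _).
  rewrite <- Hg0 at 1. rewrite (cs_geodesic_dist g x y) by (auto; lra). ring.
Qed.

Lemma cs_geodesic_dist_end (g : R -> X) (x y : X) (t : R) :
  is_cs_geodesic d g x y -> 0 <= t <= 1 -> d (g t) y = (1 - t) * d x y.
Proof.
  intros Hg Ht. pose proof Hg as (_ & Hg1 & _).
  rewrite <- Hg1 at 1. apply (cs_geodesic_dist g x y); auto; lra.
Qed.

Lemma cs_geodesic_const (g : R -> X) (x y : X) (s t : R) :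
  is_cs_geodesic d g x y -> d x y = 0 -> 0 <= s <= 1 -> 0 <= t <= 1 -> g s = g t.
Proof.
  intros (_ & _ & Hg) H0 Hs Ht. apply (metric_sep d Hm).
  rewrite Hg, H0 by assumption. ring.
Qed.

Lemma cs_geodesic_rev (g : R -> X) (x y : X) :
  is_cs_geodesic d g x y -> is_cs_geodesic d (fun t => g (1 - t)) y x.
Proof.
  intros (Hg0 & Hg1 & Hg). split; [|split].
  - rewrite Rminus_0_r. exact Hg1.
  - rewrite Rminus_diag. exact Hg0.
  - intros s t Hs Ht. rewrite Hg, (metric_sym d Hm y x) by lra.
    f_equal. rewrite <- Rabs_Ropp. f_equal. ring.
Qed.

Lemma cs_geodesics_meet_cross_le (g1 g2 : R -> X) (x1 y1 x2 y2 : X) (t : R) :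
  is_cs_geodesic d g1 x1 y1 -> is_cs_geodesic d g2 x2 y2 ->
  0 <= t <= 1 -> g1 t = g2 t -> d x1 y2 <= t * d x1 y1 + (1 - t) * d x2 y2.
Proof.
  intros Hg1 Hg2 Ht Hmeet.
  rewrite <- (cs_geodesic_dist_start g1 x1 y1 t), <- (cs_geodesic_dist_end g2 x2 y2 t), Hmeet
    by assumption.
  apply (metric_tri d Hm).
Qed.

Lemma cs_geodesics_spliced_dist (g1 g2 : R -> X) (x1 y1 x2 y2 : X) (t1 s t : R) :
  is_cs_geodesic d g1 x1 y1 -> is_cs_geodesic d g2 x2 y2 ->
  d x2 y2 = d x1 y1 -> d x1 y2 = d x1 y1 ->
  0 <= s -> s <= t1 -> t1 <= t -> t <= 1 -> g1 t1 = g2 t1 ->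
  d (g1 s) (g2 t) = (t - s) * d x1 y1.
Proof.
  intros Hg1 Hg2 Hlen Hcross Hs Hst1 Ht1t Ht Hmeet.
  pose proof (metric_tri d Hm (g1 s) (g1 t1) (g2 t)) as Hupper.
  rewrite (cs_geodesic_dist g1 x1 y1), Hmeet, (cs_geodesic_dist g2 x2 y2), Hlen in Hupper
    by (assumption || lra).
  pose proof (metric_tri d Hm x1 (g1 s) y2) as Hlower.
  pose proof (metric_tri d Hm (g1 s) (g2 t) y2) as Hlower'.
  rewrite (cs_geodesic_dist_start g1 x1 y1), Hcross in Hlower by (assumption || lra).
  rewrite (cs_geodesic_dist_end g2 x2 y2), Hlen in Hlower' by (assumption || lra).
  lra.
Qed.

Lemma cs_geodesics_agree_forward (g1 g2 : R -> X) (x1 y1 x2 y2 : X) (del t1 t : R) :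
  is_cs_geodesic d g1 x1 y1 -> is_cs_geodesic d g2 x2 y2 ->
  d x2 y2 = d x1 y1 -> d x1 y2 = d x1 y1 -> 0 < d x1 y1 ->
  (0 < K -> 4 * (del * d x1 y1) < 2 * PI / sqrt K) ->
  0 < t1 -> t1 <= t <= 1 -> t - t1 <= del -> g1 t1 = g2 t1 -> g1 t = g2 t.
Proof.
  intros Hg1 Hg2 Hlen Hcross Ha Hsmall Ht1 Ht Hdel Hmeet.
  destruct (Req_dec t1 t) as [<- | Hneq]; [exact Hmeet |].
  set (a := d x1 y1) in *.
  (* [u := g1 s] lies behind [g1 t1] by at most [t - t1], so that [p <= r]. *)
  set (s := Rmax 0 (2 * t1 - t)).
  assert (Hs : 0 <= s /\ 2 * t1 - t <= s /\ s < t1)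
    by (unfold s, Rmax; destruct (Rle_dec 0 (2 * t1 - t)); lra).
  apply (curv_ge_no_branching (g1 t1) (g1 s) (g1 t) (g2 t)
           ((t1 - s) * a) ((t - t1) * a)).
  - nra.
  - nra.
  - intros HK. specialize (Hsmall HK). nra.
  - rewrite (metric_sym d Hm). apply (cs_geodesic_dist g1 x1 y1); lra || assumption.
  - apply (cs_geodesic_dist g1 x1 y1); lra || assumption.
  - rewrite Hmeet, (cs_geodesic_dist g2 x2 y2), Hlen; lra || assumption.
  - rewrite (cs_geodesic_dist g1 x1 y1) by (lra || assumption). fold a. ring.
  - rewrite (cs_geodesics_spliced_dist g1 g2 x1 y1 x2 y2 t1) by (lra || assumption).
    fold a. ring.
Qed.

Lemma cs_geodesics_agree_near (g1 g2 : R -> X) (x1 y1 x2 y2 : X) (del t1 t : R) :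
  is_cs_geodesic d g1 x1 y1 -> is_cs_geodesic d g2 x2 y2 ->
  d x2 y2 = d x1 y1 -> d x1 y2 = d x1 y1 -> d x2 y1 = d x1 y1 -> 0 < d x1 y1 ->
  (0 < K -> 4 * (del * d x1 y1) < 2 * PI / sqrt K) ->
  0 < t1 < 1 -> 0 <= t <= 1 -> t1 - del <= t <= t1 + del -> g1 t1 = g2 t1 -> g1 t = g2 t.
Proof.
  intros Hg1 Hg2 Hlen Hcross1 Hcross2 Ha Hsmall Ht1 Ht Hdel Hmeet.
  destruct (Rle_lt_dec t1 t) as [Hle | Hlt].
  - apply (cs_geodesics_agree_forward g1 g2 x1 y1 x2 y2 del t1); try assumption; lra.
  - pose proof (cs_geodesic_rev g1 x1 y1 Hg1) as Hr1.
    pose proof (cs_geodesic_rev g2 x2 y2 Hg2) as Hr2.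
    replace t with (1 - (1 - t)) by ring.
    rewrite (metric_sym d Hm x1 y1) in *.
    apply (cs_geodesics_agree_forward (fun s => g1 (1 - s)) (fun s => g2 (1 - s))
             y1 x1 y2 x2 del (1 - t1));
      rewrite ?(metric_sym d Hm y2 x2), ?(metric_sym d Hm y1 x2); try assumption; try lra.
    replace (1 - (1 - t1)) with t1 by ring. exact Hmeet.
Qed.

End CurvatureBoundedBelow.

Lemma unit_interval_chain (P : R -> Prop) (t0 del : R) :
  0 < t0 < 1 -> 0 < del -> P t0 ->
  (forall t1 t, 0 < t1 < 1 -> P t1 -> 0 <= t <= 1 -> t1 - del <= t <= t1 + del -> P t) ->
  forall t, 0 <= t <= 1 -> P t.
Proof.
  intros Ht0 Hdel HP0 Hstep.
  assert (Hreach : forall n t,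
             0 <= t <= 1 -> t0 - INR n * del <= t <= t0 + INR n * del -> P t).
  { induction n as [| n IH]; intros t Ht Hdist.
    - replace t with t0 by (simpl in Hdist; lra). exact HP0.
    - rewrite S_INR in Hdist. assert (0 <= INR n * del) by (pose proof (pos_INR n); nra).
      destruct (Rle_dec (t0 - del) t), (Rle_dec t (t0 + del)).
      + apply (Hstep t0); [exact Ht0 | exact HP0 | lra | lra].
      + apply (Hstep (t - del)); try lra. apply IH; lra.
      + apply (Hstep (t + del)); try lra. apply IH; lra.
      + lra. }
  intros t Ht. destruct (INR_archimed del 1 Hdel) as [n Hn].
  apply (Hreach n); lra.
Qed.

Lemma swap_ineq_equal_lengths (t a b c e : R) :
  0 < t < 1 -> 0 <= a -> 0 <= b -> 0 <= c -> 0 <= e ->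
  c <= t * a + (1 - t) * b -> e <= t * b + (1 - t) * a ->
  a ^ 2 + b ^ 2 <= c ^ 2 + e ^ 2 -> b = a /\ c = a /\ e = a.
Proof.
  intros Ht Ha Hb Hc He Hc' He' Hswap.
  assert (c ^ 2 <= (t * a + (1 - t) * b) ^ 2) by (apply pow_incr; lra).
  assert (e ^ 2 <= (t * b + (1 - t) * a) ^ 2) by (apply pow_incr; lra).
  assert (Hsq : t * (1 - t) * (a - b) ^ 2 <= 0).
  { assert ((t * a + (1 - t) * b) ^ 2 + (t * b + (1 - t) * a) ^ 2
            = a ^ 2 + b ^ 2 - 2 * (t * (1 - t) * (a - b) ^ 2)) by ring.
    lra. }
  assert (Hba : b = a).
  { assert (Hdiff : (a - b) ^ 2 <= 0).
    { destruct (Rle_dec ((a - b) ^ 2) 0) as [Hle | Hgt]; [exact Hle | exfalso].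
      assert (0 < t * (1 - t) * (a - b) ^ 2) by (apply Rmult_lt_0_compat; nra).
      lra. }
    nra. }
  subst b. nra.
Qed.

Lemma exists_small_scale (K a : R) :
  0 < a -> exists del, 0 < del /\ (0 < K -> 4 * (del * a) < 2 * PI / sqrt K).
Proof.
  intros Ha. pose proof PI_RGT_0.
  destruct (Rlt_dec 0 K) as [HK | HK].
  - pose proof (sqrt_lt_R0 K HK).
    exists (PI / (4 * a * sqrt K)). split.
    + apply Rdiv_lt_0_compat; nra.
    + intros _. apply Rmult_lt_reg_r with (sqrt K); [assumption |].
      field_simplify; lra.
  - exists 1. split; lra.
Qed.

Theorem lemma3p2 (X : Type) (d : X -> X -> R) (K : R)
  (HX : is_alexandrov d K)
  (x1 x2 y1 y2 : X)
  (Hd : d x1 y1 ^ 2 + d x2 y2 ^ 2 <= d x1 y2 ^ 2 + d x2 y1 ^ 2)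
  (g1 g2 : R -> X)
  (Hg1 : is_cs_geodesic d g1 x1 y1) (Hg2 : is_cs_geodesic d g2 x2 y2)
  (t0 : R) (Ht0 : 0 < t0 < 1) (Hmeet : g1 t0 = g2 t0) :
  forall t, 0 <= t <= 1 -> g1 t = g2 t.
Proof.
  destruct HX as (Hm & _ & _ & _ & _ & _ & Hcurv).
  pose proof (metric_nonneg d Hm) as Hnonneg.
  assert (Ht0' : 0 <= t0 <= 1) by lra.
  pose proof (cs_geodesics_meet_cross_le X d Hm g1 g2 x1 y1 x2 y2 t0 Hg1 Hg2 Ht0' Hmeet).
  pose proof (cs_geodesics_meet_cross_le X d Hm g2 g1 x2 y2 x1 y1 t0 Hg2 Hg1 Ht0'
                (eq_sym Hmeet)).
  destruct (swap_ineq_equal_lengths t0 (d x1 y1) (d x2 y2) (d x1 y2) (d x2 y1))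
    as (Hlen & Hcross1 & Hcross2); try assumption; try apply Hnonneg.
  destruct (Req_dec (d x1 y1) 0) as [Ha0 | Ha].
  - intros t Ht.
    rewrite (cs_geodesic_const X d Hm g1 x1 y1 t t0), Hmeet,
      (cs_geodesic_const X d Hm g2 x2 y2 t0 t); (assumption || congruence || lra).
  - assert (Hpos : 0 < d x1 y1) by (pose proof (Hnonneg x1 y1); lra).
    destruct (exists_small_scale K (d x1 y1) Hpos) as (del & Hdel & Hsmall).
    apply (unit_interval_chain (fun t => g1 t = g2 t) t0 del); try assumption.
    intros t1 t Ht1 Hmeet1 Ht Hnear.
    apply (cs_geodesics_agree_near X d K Hm Hcurv g1 g2 x1 y1 x2 y2 del t1);
      try assumption; lra.
Qed.
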